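(* On $\mathbb R^4$ with coordinates $(q_1,p_1,q_2,p_2)$ and $\omega=dp_1\wedge dq_1+dp_2\wedge dq_2$, let $H=q_1q_2-p_1p_2$, $J=\tfrac12(q_1^2+p_1^2)-\tfrac12(q_2^2+p_2^2)$, let $B=\{q_1^2+q_2^2+p_1^2+p_2^2<2r\}$ for fixed $r>0$, and take the rotation 1-form $\vartheta=d\theta_1=\dfrac{p_1\,dq_1-q_1\,dp_1}{q_1^2+p_1^2}$ on $B\setminus\{q_1=p_1=0\}$. Let $\Gamma(s)=(j(s),h(s))=(\ell\cos s,\ell\sin s)$, $s\in[0,2\pi]$, with $\ell>0$ sufficiently small. Then $\operatorname{var}_\Gamma\Phi_{\mathrm{rel}}=2\pi$, and hence the monodromy number is $k=-1$.
   Context: $X_H,X_J$ are the Hamiltonian vector fields; the flow of $X_J$ is $2\pi$-periodic. For $(j,h)\neq(0,0)$ small, $F^{-1}(j,h)\cap\overline B$ is a cylinder whose boundary consists of two $X_J$-orbits $S_-,S_+$, with the flow of $X_H$ carrying $S_-$ to $S_+$. $\Phi_{\mathrm{rel}}(j,h)=\int\vartheta$ over the portion inside $B$ of an $X_H$-orbit in $F^{-1}(j,h)$, from $S_-$ to $S_+$ (independent of the orbit). Variation: for $g:\Gamma\to\mathbb R$ with finitely many jumps $d_j=\lim_{\varepsilon\to0^+}(g(p_j+\varepsilon)-g(p_j-\varepsilon))$ along increasing $s$, $\operatorname{var}_\Gamma g=-\sum_jd_j$. Monodromy number $k$ of the torus bundle over $\Gamma$ (for any integrable system that agrees with this local model near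 a focus-focus point with singly pinched compact fiber) is related by $\operatorname{var}_\Gamma\Phi_{\mathrm{rel}}=-2\pi k$. *)

From Stdlib Require Import Reals List ZArith ClassicalEpsilon.
Open Scope R_scope.

Record R4 := mkR4 { q1 : R; p1 : R; q2 : R; p2 : R }.

Definition Hf (x : R4) : R := q1 x * q2 x - p1 x * p2 x.
Definition Jf (x : R4) : R :=
  / 2 * (q1 x ^ 2 + p1 x ^ 2) - / 2 * (q2 x ^ 2 + p2 x ^ 2).

Definition dH_dq1 (x : R4) : R := q2 x.
Definition dH_dp1 (x : R4) : R := - p2 x.
Definition dH_dq2 (x : R4) : R := q1 x.
Definition dH_dp2 (x : R4) : R := - p1 x.

(* Hamiltonian vector field of H for omega = dp1/\dq1 + dp2/\dq2, with the
   convention  i_{X_H} omega = - dH, i.e. Hamilton's equations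
   dq_i/dt = dH/dp_i,  dp_i/dt = - dH/dq_i. *)
Definition XH (x : R4) : R4 :=
  mkR4 (dH_dp1 x) (- dH_dq1 x) (dH_dp2 x) (- dH_dq2 x).

Definition normsq (x : R4) : R := q1 x ^ 2 + q2 x ^ 2 + p1 x ^ 2 + p2 x ^ 2.

Definition inB (r : R) (x : R4) : Prop := normsq x < 2 * r.
Definition onSphere (r : R) (x : R4) : Prop := normsq x = 2 * r.

Definition theta (x v : R4) : R :=
  (p1 x * q1 v - q1 x * p1 v) / (q1 x ^ 2 + p1 x ^ 2).

Definition is_XH_orbit (gamma : R -> R4) : Prop :=
  forall t,
    derivable_pt_lim (fun u => q1 (gamma u)) t (q1 (XH (gamma t))) /\
    derivable_pt_lim (fun u => p1 (gamma u)) t (p1 (XH (gamma t))) /\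
    derivable_pt_lim (fun u => q2 (gamma u)) t (q2 (XH (gamma t))) /\
    derivable_pt_lim (fun u => p2 (gamma u)) t (p2 (XH (gamma t))).

Definition orbit_portion (r j h : R) (gamma : R -> R4) (t0 t1 : R) : Prop :=
  is_XH_orbit gamma /\ t0 < t1 /\
  Jf (gamma t0) = j /\ Hf (gamma t0) = h /\
  onSphere r (gamma t0) /\ onSphere r (gamma t1) /\
  (forall t, t0 < t < t1 -> inB r (gamma t)).

Definition theta_along (gamma : R -> R4) (t : R) : R :=
  theta (gamma t) (XH (gamma t)).

Definition PhiRel_spec (r j h v : R) : Prop :=
  (exists gamma t0 t1, orbit_portion r j h gamma t0 t1 /\
     inhabited (Riemann_integrable (theta_along gamma) t0 t1)) /\
  (forall gamma t0 t1, orbit_portion r j h gamma t0 t1 ->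
     forall pr : Riemann_integrable (theta_along gamma) t0 t1,
       RiemannInt pr = v).

Definition Phi_rel (r j h : R) : R :=
  epsilon (inhabits 0) (PhiRel_spec r j h).

Definition right_lim (g : R -> R) (p L : R) : Prop :=
  forall eps, 0 < eps -> exists delta, 0 < delta /\
    forall s, p < s < p + delta -> Rabs (g s - L) < eps.
Definition left_lim (g : R -> R) (p L : R) : Prop :=
  forall eps, 0 < eps -> exists delta, 0 < delta /\
    forall s, p - delta < s < p -> Rabs (g s - L) < eps.
Definition cont_on_loop_at (g : R -> R) (s : R) : Prop :=
  forall eps, 0 < eps -> exists delta, 0 < delta /\
    forall s', 0 <= s' <= 2 * PI -> Rabs (s' - s) < delta ->
      Rabs (g s' - g s) < eps.

(* var_Gamma g = v : g (a function of s in [0,2 pi]) is continuous except at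
   finitely many jump points p_j (listed as (p_j, left limit, right limit)),
   d_j = right limit - left limit, and v = - sum_j d_j. *)
Definition var_Gamma (g : R -> R) (v : R) : Prop :=
  exists js : list (R * R * R),
    NoDup (map (fun x => fst (fst x)) js) /\
    (forall p Lm Lp, In (p, Lm, Lp) js ->
       0 < p < 2 * PI /\ left_lim g p Lm /\ right_lim g p Lp) /\
    (forall s, 0 <= s <= 2 * PI -> ~ In s (map (fun x => fst (fst x)) js) ->
       cont_on_loop_at g s) /\
    v = - fold_right Rplus 0 (map (fun x => snd x - snd (fst x)) js).

Definition PhiRel_on_Gamma (r l : R) (s : R) : R :=
  Phi_rel r (l * cos s) (l * sin s).

From Stdlib Require Import Reals List ZArith ClassicalEpsilon Lra Psatz.
From Coquelicot Require Import Coquelicot.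
Open Scope R_scope.

(* X_H is linear: X_H x = - sigma x for the involution sigma, so its flow is
   x cosh t - sigma x sinh t.  On the plane z = (q1, p1) the form vartheta is minus
   the differential of the angle, hence Phi_rel is minus the angle from the entry
   point z0 to the exit point z1 of the orbit portion (in between, z stays in the
   half-plane around z0 + z1).  Conservation of J and H and the exit condition give
   z0.z1 = rho + j r / rho and z0 x z1 = - h W / rho, with rho = |(j, h)| and
   W = sqrt (r^2 - rho^2), so Phi_rel = 2 atan (h W / ((r + rho) (rho + j))).
   Along Gamma this is 2 atan (c tan (s / 2)), continuous except at s = PI, where
   it jumps from PI to -PI: the variation is 2 PI and k = -1. *)

Lemma cosh_sinh_sq x : cosh x ^ 2 - sinh x ^ 2 = 1.
Proof. unfold cosh, sinh. rewrite exp_Ropp. field. apply Rgt_not_eq, exp_pos. Qed.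

Lemma sinh_sub x y : sinh (x - y) = sinh x * cosh y - cosh x * sinh y.
Proof.
  unfold sinh, cosh, Rminus.
  rewrite Ropp_plus_distr, Ropp_involutive, !exp_plus, !exp_Ropp.
  field. split; apply Rgt_not_eq, exp_pos.
Qed.

Lemma cosh_pos x : 0 < cosh x.
Proof. unfold cosh. pose proof (exp_pos x). pose proof (exp_pos (- x)). lra. Qed.

Lemma sinh_pos x : 0 < x -> 0 < sinh x.
Proof. intros Hx. rewrite <- sinh_0. exact (sinh_lt 0 x Hx). Qed.

Lemma sinh_nonneg x : 0 <= x -> 0 <= sinh x.
Proof. intros [Hx | <-]; [apply Rlt_le, sinh_pos, Hx | rewrite sinh_0; apply Rle_refl]. Qed.

Lemma sinh_sub_add_pos T t : 0 < T -> 0 <= t <= T -> 0 < sinh (T - t) + sinh t.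
Proof.
  intros HT Ht. pose proof (sinh_nonneg (T - t)). pose proof (sinh_nonneg t).
  destruct (Req_dec t 0) as [-> | Ht0].
  - rewrite Rminus_0_r, sinh_0. pose proof (sinh_pos T HT). lra.
  - pose proof (sinh_pos t ltac:(lra)). lra.
Qed.

Lemma is_derive_zero_const (g : R -> R) :
  (forall t, is_derive g t 0) -> forall u v, g u = g v.
Proof.
  intros Hg.
  assert (Hlt : forall u v, u < v -> g u = g v)
    by (intros u v Huv; apply (eq_is_derive g); [intros t _; apply Hg | exact Huv]).
  intros u v. destruct (Rtotal_order u v) as [H | [-> | H]]; auto.
  symmetry. auto.
Qed.

Lemma is_derive_exp_solution (f : R -> R) (c t0 : R) :
  (forall t, is_derive f t (c * f t)) -> forall t, f t = f t0 * exp (c * (t - t0)).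
Proof.
  intros Hf t.
  set (g := fun u => f u * exp (- (c * (u - t0)))).
  assert (Hg : g t = g t0).
  { apply is_derive_zero_const. intros u. unfold g. auto_derive.
    - exists (c * f u); apply Hf.
    - rewrite (is_derive_unique (fun v : R => f v) u _ (Hf u)). ring. }
  unfold g in Hg. rewrite Rminus_diag, Rmult_0_r, Ropp_0, exp_0, Rmult_1_r in Hg.
  rewrite <- Hg, Rmult_assoc, <- exp_plus, Rplus_opp_l, exp_0. ring.
Qed.

(* [f' = -g, g' = -f] decouples into [(f+g)' = -(f+g)] and [(f-g)' = f-g]. *)
Lemma is_derive_cross_solution (f g : R -> R) (t0 : R) :
  (forall t, is_derive f t (- g t)) -> (forall t, is_derive g t (- f t)) ->
  forall t, f t = f t0 * cosh (t - t0) - g t0 * sinh (t - t0).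
Proof.
  intros Hf Hg t.
  assert (Hsum := is_derive_exp_solution (fun u => f u + g u) (-1) t0).
  assert (Hdiff := is_derive_exp_solution (fun u => f u - g u) 1 t0).
  cbv beta in Hsum, Hdiff.
  replace (f t) with (((f t + g t) + (f t - g t)) / 2) by field.
  rewrite Hsum, Hdiff.
  - unfold cosh, sinh. replace (-1 * (t - t0)) with (- (t - t0)) by ring.
    rewrite Rmult_1_l. field.
  all: intros u; auto_derive;
    [ repeat split; [exists (- g u); apply Hf | exists (- f u); apply Hg]
    | rewrite (is_derive_unique (fun v : R => f v) u _ (Hf u)),
        (is_derive_unique (fun v : R => g v) u _ (Hg u)); ring ].
Qed.

(* The flow of X_H is [exp (- t sigma)] for the involution
   sigma (q1,p1,q2,p2) = (p2,q2,p1,q1), since X_H x = - sigma x. *)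
Definition XH_flow (t : R) (x : R4) : R4 :=
  mkR4 (q1 x * cosh t - p2 x * sinh t) (p1 x * cosh t - q2 x * sinh t)
       (q2 x * cosh t - p1 x * sinh t) (p2 x * cosh t - q1 x * sinh t).

(* The imaginary part of (q1 + i p1)(q2 + i p2), whose real part is H. *)
Definition twist (x : R4) : R := q1 x * p2 x + p1 x * q2 x.

Lemma XH_flow_0 x : XH_flow 0 x = x.
Proof. unfold XH_flow. rewrite cosh_0, sinh_0. destruct x; cbn. f_equal; ring. Qed.

Lemma XH_flow_is_orbit x : is_XH_orbit (fun t => XH_flow t x).
Proof.
  intros t. unfold XH, dH_dp1, dH_dq1, dH_dp2, dH_dq2. cbn.
  rewrite <- !is_derive_Reals.
  split; [|split; [|split]]; auto_derive; auto; ring.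
Qed.

Lemma XH_orbit_is_derive gamma t : is_XH_orbit gamma ->
  is_derive (fun u => q1 (gamma u)) t (- p2 (gamma t)) /\
  is_derive (fun u => p1 (gamma u)) t (- q2 (gamma t)) /\
  is_derive (fun u => q2 (gamma u)) t (- p1 (gamma t)) /\
  is_derive (fun u => p2 (gamma u)) t (- q1 (gamma t)).
Proof. intros H. rewrite !is_derive_Reals. exact (H t). Qed.

Lemma XH_orbit_flow gamma t0 t :
  is_XH_orbit gamma -> gamma t = XH_flow (t - t0) (gamma t0).
Proof.
  intros H.
  pose proof (fun u => XH_orbit_is_derive gamma u H) as D.
  assert (Dq1 := fun u => proj1 (D u)).
  assert (Dp1 := fun u => proj1 (proj2 (D u))).
  assert (Dq2 := fun u => proj1 (proj2 (proj2 (D u)))).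
  assert (Dp2 := fun u => proj2 (proj2 (proj2 (D u)))).
  assert (Sq1 := is_derive_cross_solution _ _ t0 Dq1 Dp2 t).
  assert (Sp1 := is_derive_cross_solution _ _ t0 Dp1 Dq2 t).
  assert (Sq2 := is_derive_cross_solution _ _ t0 Dq2 Dp1 t).
  assert (Sp2 := is_derive_cross_solution _ _ t0 Dp2 Dq1 t).
  cbv beta in Sq1, Sp1, Sq2, Sp2.
  unfold XH_flow. rewrite <- Sq1, <- Sp1, <- Sq2, <- Sp2.
  destruct (gamma t); reflexivity.
Qed.

Lemma Jf_XH_flow t x : Jf (XH_flow t x) = Jf x.
Proof.
  pose proof (cosh_sinh_sq t) as Hcs.
  transitivity (Jf x * (cosh t ^ 2 - sinh t ^ 2)).
  - unfold Jf, XH_flow; cbn. ring.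
  - rewrite Hcs. ring.
Qed.

Lemma normsq_XH_flow t x :
  normsq (XH_flow t x) =
  normsq x + 4 * sinh t * (normsq x / 2 * sinh t - twist x * cosh t).
Proof.
  transitivity (normsq x * (cosh t ^ 2 + sinh t ^ 2) - 4 * twist x * cosh t * sinh t).
  - unfold normsq, twist, XH_flow; cbn. ring.
  - replace (cosh t ^ 2) with (1 + sinh t ^ 2) by (pose proof (cosh_sinh_sq t); lra).
    field.
Qed.

(* The argument of (x, y) in (-PI, PI), through the half-angle formula
   tan (theta / 2) = y / (|(x, y)| + x); it is smooth off the ray y = 0, x <= 0. *)
Definition polar_angle (x y : R) : R := 2 * atan (y / (sqrt (x ^ 2 + y ^ 2) + x)).

Lemma is_derive_polar_angle (x y : R -> R) (t dx dy : R) :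
  is_derive x t dx -> is_derive y t dy -> 0 < sqrt (x t ^ 2 + y t ^ 2) + x t ->
  is_derive (fun u => polar_angle (x u) (y u)) t
    ((x t * dy - y t * dx) / (x t ^ 2 + y t ^ 2)).
Proof.
  intros Hx Hy Hpos.
  assert (Hnorm : 0 < x t ^ 2 + y t ^ 2).
  { destruct (Req_dec (x t ^ 2 + y t ^ 2) 0) as [E | E]; [|nra].
    assert (x t = 0) by nra. rewrite E, sqrt_0 in Hpos. lra. }
  unfold polar_angle. auto_derive;
    replace (x t * (x t * 1) + y t * (y t * 1)) with (x t ^ 2 + y t ^ 2) by ring.
  - repeat split; try (eexists; eassumption); lra.
  - rewrite (is_derive_unique (fun u : R => x u) t _ Hx),
      (is_derive_unique (fun u : R => y u) t _ Hy).
    set (n := sqrt (x t ^ 2 + y t ^ 2)) in *.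
    assert (Hn : n * n = x t ^ 2 + y t ^ 2) by (apply sqrt_sqrt; lra).
    assert (0 < n) by (apply sqrt_lt_R0; lra).
    set (X := x t) in *. set (Y := y t) in *.
    rewrite <- Hn.
    field_simplify_eq.
    + replace (Y ^ 3) with (Y * Y ^ 2) by ring.
      replace (Y ^ 2) with (n ^ 2 - X ^ 2) by lra. ring.
    + repeat split; nra.
Qed.

Lemma polar_angle_x_axis x : polar_angle x 0 = 0.
Proof. unfold polar_angle. unfold Rdiv. rewrite Rmult_0_l, atan_0. ring. Qed.

Lemma norm2_pos_of_halfplane x y V1 V2 : 0 < x * V1 + y * V2 -> 0 < x ^ 2 + y ^ 2.
Proof.
  intros H. destruct (Rle_lt_dec (x ^ 2 + y ^ 2) 0) as [Hle | Hlt]; [|exact Hlt].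
  assert (x = 0) by nra. assert (y = 0) by nra. subst. lra.
Qed.

(* If the plane vectors u and z lie in a common open half-plane, then z is not
   a nonpositive multiple of u, so the angle from u to z is in the smooth range. *)
Lemma polar_angle_domain u1 u2 z1 z2 V1 V2 :
  0 < u1 * V1 + u2 * V2 -> 0 < z1 * V1 + z2 * V2 ->
  0 < sqrt ((u1 * z1 + u2 * z2) ^ 2 + (u1 * z2 - u2 * z1) ^ 2) + (u1 * z1 + u2 * z2).
Proof.
  intros Hu Hz. set (d := u1 * z1 + u2 * z2). set (c := u1 * z2 - u2 * z1).
  destruct (Rlt_or_le 0 (sqrt (d ^ 2 + c ^ 2) + d)) as [H | H]; [exact H | exfalso].
  assert (Hs : sqrt (d ^ 2 + c ^ 2) * sqrt (d ^ 2 + c ^ 2) = d ^ 2 + c ^ 2)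
    by (apply sqrt_sqrt; nra).
  pose proof (sqrt_pos (d ^ 2 + c ^ 2)).
  assert (Hc : c = 0) by nra.
  assert (Hd : d <= 0) by lra.
  assert (Hdecomp : (u1 ^ 2 + u2 ^ 2) * (z1 * V1 + z2 * V2)
                    = d * (u1 * V1 + u2 * V2) + c * (u1 * V2 - u2 * V1))
    by (unfold c, d; ring).
  rewrite Hc in Hdecomp.
  pose proof (norm2_pos_of_halfplane _ _ _ _ Hu). nra.
Qed.

Lemma is_derive_angle_from (x y : R -> R) (a t dx dy V1 V2 : R) :
  is_derive x t dx -> is_derive y t dy ->
  0 < x a * V1 + y a * V2 -> 0 < x t * V1 + y t * V2 ->
  is_derive (fun u => polar_angle (x a * x u + y a * y u) (x a * y u - y a * x u)) t
    ((x t * dy - y t * dx) / (x t ^ 2 + y t ^ 2)).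
Proof.
  intros Hx Hy Ha Ht.
  pose proof (norm2_pos_of_halfplane _ _ _ _ Ha).
  pose proof (norm2_pos_of_halfplane _ _ _ _ Ht).
  assert (Hdot : is_derive (fun u => x a * x u + y a * y u) t (x a * dx + y a * dy)).
  { auto_derive; [repeat split; eexists; eassumption |].
    rewrite (is_derive_unique (fun u : R => x u) t _ Hx),
      (is_derive_unique (fun u : R => y u) t _ Hy). ring. }
  assert (Hcross : is_derive (fun u => x a * y u - y a * x u) t (x a * dy - y a * dx)).
  { auto_derive; [repeat split; eexists; eassumption |].
    rewrite (is_derive_unique (fun u : R => x u) t _ Hx),
      (is_derive_unique (fun u : R => y u) t _ Hy). ring. }
  replace ((x t * dy - y t * dx) / (x t ^ 2 + y t ^ 2)) with
    (((x a * x t + y a * y t) * (x a * dy - y a * dx)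
      - (x a * y t - y a * x t) * (x a * dx + y a * dy))
     / ((x a * x t + y a * y t) ^ 2 + (x a * y t - y a * x t) ^ 2))
    by (field; split; nra).
  apply (is_derive_polar_angle (fun u => x a * x u + y a * y u)
           (fun u => x a * y u - y a * x u)); [exact Hdot | exact Hcross |].
  exact (polar_angle_domain _ _ _ _ V1 V2 Ha Ht).
Qed.

Lemma continuous_of_ex_derive (f : R -> R) x : ex_derive f x -> continuous f x.
Proof. exact (ex_derive_continuous f x). Qed.

(* The form (y dx - x dy) / (x^2 + y^2) is minus the differential of the angle
   measured from the initial point. *)
Lemma is_RInt_angle_form (x y dx dy : R -> R) (a b V1 V2 : R) :
  a <= b ->
  (forall t, a <= t <= b -> is_derive x t (dx t)) ->
  (forall t, a <= t <= b -> is_derive y t (dy t)) ->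
  (forall t, a <= t <= b -> ex_derive dx t) ->
  (forall t, a <= t <= b -> ex_derive dy t) ->
  (forall t, a <= t <= b -> 0 < x t * V1 + y t * V2) ->
  is_RInt (fun t => (y t * dx t - x t * dy t) / (x t ^ 2 + y t ^ 2)) a b
    (- polar_angle (x a * x b + y a * y b) (x a * y b - y a * x b)).
Proof.
  intros Hab Hx Hy Hdx Hdy Hhalf.
  set (F := fun t => polar_angle (x a * x t + y a * y t) (x a * y t - y a * x t)).
  assert (Ha : a <= a <= b) by lra.
  assert (HFa : F a = 0).
  { unfold F. replace (x a * y a - y a * x a) with 0 by ring. apply polar_angle_x_axis. }
  replace (- polar_angle _ _) with (- F b - - F a) by (rewrite HFa; unfold F; ring).
  apply (is_RInt_derive (fun t => - F t)); rewrite Rmin_left, Rmax_right by exact Hab;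
    intros t Ht; pose proof (norm2_pos_of_halfplane _ _ _ _ (Hhalf t Ht)).
  - replace ((y t * dx t - x t * dy t) / (x t ^ 2 + y t ^ 2))
      with (- ((x t * dy t - y t * dx t) / (x t ^ 2 + y t ^ 2))) by (field; lra).
    apply (is_derive_opp F).
    exact (is_derive_angle_from x y a t _ _ V1 V2 (Hx t Ht) (Hy t Ht) (Hhalf a Ha) (Hhalf t Ht)).
  - apply continuous_of_ex_derive. auto_derive. repeat split; first
      [ now apply Hdx | now apply Hdy | exists (dx t); now apply Hx
      | exists (dy t); now apply Hy | nra ].
Qed.

Lemma planar_norm2_of_level r j x :
  normsq x = 2 * r -> Jf x = j -> q1 x ^ 2 + p1 x ^ 2 = r + j.
Proof. unfold normsq, Jf. lra. Qed.

Lemma twist_sq_add_Hf_sq x :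
  twist x ^ 2 + Hf x ^ 2 = (q1 x ^ 2 + p1 x ^ 2) * (q2 x ^ 2 + p2 x ^ 2).
Proof. unfold twist, Hf. ring. Qed.

Section OrbitPortion.

Variables (r j h rho W T : R) (x0 : R4).
Hypothesis Hrho : 0 < rho < r.
Hypothesis Hrho2 : rho ^ 2 = h ^ 2 + j ^ 2.
Hypothesis HW : 0 < W.
Hypothesis HW2 : W ^ 2 = r ^ 2 - rho ^ 2.
Hypothesis Hj : 0 < rho + j.
Hypothesis HJ : Jf x0 = j.
Hypothesis HH : Hf x0 = h.
Hypothesis Hstart : normsq x0 = 2 * r.
Hypothesis HT : 0 < T.
Hypothesis Hexit : normsq (XH_flow T x0) = 2 * r.

(* Returning to the sphere forces r sinh T = twist cosh T, and twist^2 = W^2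
   because |z w|^2 = |z|^2 |w|^2 with |z|^2 = r + j and |w|^2 = r - j. *)
Lemma portion_exit_cosh_sinh : cosh T = r / rho /\ sinh T = W / rho /\ twist x0 = W.
Proof.
  pose proof (cosh_pos T) as HC. pose proof (sinh_pos T HT) as HS.
  pose proof (cosh_sinh_sq T) as Hcs.
  set (C := cosh T) in *. set (S := sinh T) in *. set (k := twist x0).
  assert (HrS : r * S = k * C).
  { rewrite normsq_XH_flow, Hstart in Hexit. fold C S k in Hexit.
    assert (Hprod : S * (r * S - k * C) = 0) by nra.
    apply Rmult_integral in Hprod as [? | ?]; lra. }
  assert (Hk2 : k ^ 2 = W ^ 2).
  { pose proof (twist_sq_add_Hf_sq x0) as Hid. fold k in Hid.
    rewrite HH, (planar_norm2_of_level r j x0 Hstart HJ) in Hid.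
    replace (q2 x0 ^ 2 + p2 x0 ^ 2) with (r - j) in Hid
      by (unfold normsq, Jf in *; lra).
    nra. }
  assert (Hk : k = W) by (assert (0 < k) by nra; nra).
  rewrite Hk in HrS.
  assert (HCrho : (C * rho) ^ 2 = r ^ 2).
  { transitivity (C ^ 2 * rho ^ 2); [ring|].
    replace (rho ^ 2) with (r ^ 2 - W ^ 2) by lra.
    transitivity (r ^ 2 * C ^ 2 - (W * C) ^ 2); [ring|].
    rewrite <- HrS. transitivity (r ^ 2 * (C ^ 2 - S ^ 2)); [ring | rewrite Hcs; ring]. }
  assert (HC' : C = r / rho).
  { apply (Rmult_eq_reg_r rho); [|lra]. field_simplify; [|lra].
    apply Rsqr_inj; unfold Rsqr; nra. }
  split; [exact HC' | split; [|exact Hk]].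
  apply (Rmult_eq_reg_l r); [|lra]. rewrite HrS, HC'. field. lra.
Qed.

Lemma portion_exit_dot :
  q1 x0 * q1 (XH_flow T x0) + p1 x0 * p1 (XH_flow T x0) = rho + j * r / rho.
Proof.
  destruct portion_exit_cosh_sinh as (HC & HS & Hk).
  transitivity ((q1 x0 ^ 2 + p1 x0 ^ 2) * cosh T - twist x0 * sinh T);
    [unfold twist, XH_flow; cbn; ring |].
  rewrite (planar_norm2_of_level r j x0 Hstart HJ), HC, HS, Hk.
  field_simplify_eq; nra.
Qed.

Lemma portion_exit_cross :
  q1 x0 * p1 (XH_flow T x0) - p1 x0 * q1 (XH_flow T x0) = - (h * W / rho).
Proof.
  destruct portion_exit_cosh_sinh as (_ & HS & _).
  transitivity (- Hf x0 * sinh T); [unfold Hf, XH_flow; cbn; ring |].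
  rewrite HH, HS. field. lra.
Qed.

(* Between entry and exit the planar part (q1, p1) of the orbit is a positive
   combination of its endpoints:
   sinh T z(t) = sinh (T - t) z(0) + sinh t z(T). *)
Lemma portion_halfplane t : 0 <= t <= T ->
  0 < q1 (XH_flow t x0) * (q1 x0 + q1 (XH_flow T x0))
      + p1 (XH_flow t x0) * (p1 x0 + p1 (XH_flow T x0)).
Proof.
  intros Ht.
  set (V1 := q1 x0 + q1 (XH_flow T x0)). set (V2 := p1 x0 + p1 (XH_flow T x0)).
  set (A := r + j + (rho + j * r / rho)).
  assert (HA : 0 < A).
  { unfold A. replace (r + j + (rho + j * r / rho)) with ((r + rho) * (rho + j) / rho)
      by (field; lra).
    apply Rdiv_lt_0_compat; nra. }
  assert (Hentry : q1 x0 * V1 + p1 x0 * V2 = A).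
  { transitivity ((q1 x0 ^ 2 + p1 x0 ^ 2)
                  + (q1 x0 * q1 (XH_flow T x0) + p1 x0 * p1 (XH_flow T x0)));
      [unfold V1, V2; ring |].
    rewrite (planar_norm2_of_level r j x0 Hstart HJ), portion_exit_dot. reflexivity. }
  assert (Hexit' : q1 (XH_flow T x0) * V1 + p1 (XH_flow T x0) * V2 = A).
  { transitivity ((q1 x0 * q1 (XH_flow T x0) + p1 x0 * p1 (XH_flow T x0))
                  + (q1 (XH_flow T x0) ^ 2 + p1 (XH_flow T x0) ^ 2));
      [unfold V1, V2; ring |].
    rewrite (planar_norm2_of_level r j _ Hexit); [|rewrite Jf_XH_flow; exact HJ].
    rewrite portion_exit_dot. unfold A. ring. }
  pose proof (sinh_sub_add_pos T t HT Ht).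
  apply (Rmult_lt_reg_l (sinh T)); [exact (sinh_pos T HT) |].
  rewrite Rmult_0_r.
  replace (sinh T * _) with
    (sinh (T - t) * (q1 x0 * V1 + p1 x0 * V2)
     + sinh t * (q1 (XH_flow T x0) * V1 + p1 (XH_flow T x0) * V2))
    by (rewrite sinh_sub; unfold V1, V2, XH_flow; cbn; ring).
  rewrite Hentry, Hexit'. nra.
Qed.

Lemma portion_angle :
  - polar_angle (rho + j * r / rho) (- (h * W / rho))
  = 2 * atan (h * W / ((r + rho) * (rho + j))).
Proof.
  unfold polar_angle.
  replace (sqrt ((rho + j * r / rho) ^ 2 + (- (h * W / rho)) ^ 2)) with (r + j).
  - replace (- (h * W / rho) / (r + j + (rho + j * r / rho)))
      with (- (h * W / ((r + rho) * (rho + j)))) by (field; nra).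
    rewrite atan_opp. ring.
  - rewrite <- (sqrt_pow2 (r + j)) by lra. f_equal.
    field_simplify_eq; [|lra].
    rewrite HW2. replace (h ^ 2) with (rho ^ 2 - j ^ 2) by lra. ring.
Qed.

End OrbitPortion.

Definition Phi_formula (r j h : R) : R :=
  let rho := sqrt (h ^ 2 + j ^ 2) in
  2 * atan (h * sqrt (r ^ 2 - rho ^ 2) / ((r + rho) * (rho + j))).

Lemma is_RInt_theta_orbit_portion r j h gamma t0 t1 :
  0 < sqrt (h ^ 2 + j ^ 2) < r -> 0 < sqrt (h ^ 2 + j ^ 2) + j ->
  orbit_portion r j h gamma t0 t1 ->
  is_RInt (theta_along gamma) t0 t1 (Phi_formula r j h).
Proof.
  intros Hrho Hj (Horb & Ht & HJ & HH & Hstart & Hexit & _).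
  unfold Phi_formula.
  set (rho := sqrt (h ^ 2 + j ^ 2)) in *.
  set (W := sqrt (r ^ 2 - rho ^ 2)).
  assert (Hrho2 : rho ^ 2 = h ^ 2 + j ^ 2) by (apply pow2_sqrt; nra).
  assert (HW2 : W ^ 2 = r ^ 2 - rho ^ 2) by (apply pow2_sqrt; nra).
  assert (HW : 0 < W) by (apply sqrt_lt_R0; nra).
  assert (HT : 0 < t1 - t0) by lra.
  set (x0 := gamma t0) in *.
  assert (Hflow : forall t, gamma t = XH_flow (t - t0) x0)
    by (intros t; exact (XH_orbit_flow gamma t0 t Horb)).
  rewrite Hflow in Hexit.
  rewrite <- (portion_angle r j h rho W), <- (portion_exit_dot r j h rho W (t1 - t0) x0),
    <- (portion_exit_cross r j h rho W (t1 - t0) x0), <- Hflow by assumption.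
  assert (Hhalf : forall t, t0 <= t <= t1 ->
    0 < q1 (gamma t) * (q1 x0 + q1 (gamma t1)) + p1 (gamma t) * (p1 x0 + p1 (gamma t1))).
  { intros t Ht'. rewrite !(Hflow t), !(Hflow t1).
    apply (portion_halfplane r j h rho W (t1 - t0) x0); auto; lra. }
  apply (is_RInt_angle_form (fun t => q1 (gamma t)) (fun t => p1 (gamma t))
           (fun t => - p2 (gamma t)) (fun t => - q2 (gamma t)) t0 t1
           (q1 x0 + q1 (gamma t1)) (p1 x0 + p1 (gamma t1)));
    [lra | | | | | exact Hhalf]; intros t _;
    destruct (XH_orbit_is_derive gamma t Horb) as (Dq1 & Dp1 & Dq2 & Dp2);
    [exact Dq1 | exact Dp1 | eexists; apply (is_derive_opp _ _ _ Dp2)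
    | eexists; apply (is_derive_opp _ _ _ Dq2)].
Qed.

Definition start_point (r j h W : R) : R4 :=
  let a := sqrt (r + j) in mkR4 a 0 (h / a) (W / a).

Lemma start_point_levels r j h W :
  0 < r + j -> h ^ 2 + W ^ 2 = r ^ 2 - j ^ 2 ->
  Jf (start_point r j h W) = j /\ Hf (start_point r j h W) = h /\
  normsq (start_point r j h W) = 2 * r /\ twist (start_point r j h W) = W.
Proof.
  intros Hrj HhW. unfold start_point, Jf, Hf, normsq, twist; cbn.
  set (a := sqrt (r + j)).
  assert (Ha2 : a ^ 2 = r + j) by (apply pow2_sqrt; lra).
  assert (Ha : 0 < a) by (apply sqrt_lt_R0; lra).
  assert (Hw2 : (h / a) ^ 2 + (W / a) ^ 2 = r - j).
  { replace ((h / a) ^ 2 + (W / a) ^ 2) with ((h ^ 2 + W ^ 2) / a ^ 2) by (field; lra).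
    rewrite Ha2, HhW. field. lra. }
  repeat split; [lra | field; lra | lra | field; lra].
Qed.

(* The time T with tanh T = W / r. *)
Lemma exit_time r rho W :
  0 < rho < r -> 0 < W -> W ^ 2 = r ^ 2 - rho ^ 2 ->
  let T := ln ((r + W) / rho) in
  0 < T /\ cosh T = r / rho /\ sinh T = W / rho /\
  forall t, 0 < t < T -> r * sinh t < W * cosh t.
Proof.
  intros Hrho HW HW2 T.
  set (E := (r + W) / rho) in T.
  assert (HE : 1 < E) by (unfold E; apply (Rmult_lt_reg_r rho); [lra|]; field_simplify; nra).
  assert (HEinv : / E = (r - W) / rho) by (unfold E; field_simplify_eq; nra).
  split; [|split; [|split]].
  - unfold T. rewrite <- ln_1. apply ln_increasing; lra.
  - unfold T, cosh. rewrite exp_Ropp, exp_ln, HEinv by lra. unfold E. field. lra.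
  - unfold T, sinh. rewrite exp_Ropp, exp_ln, HEinv by lra. unfold E. field. lra.
  - intros t [Ht0 HtT].
    assert (He : 1 < exp t < E).
    { split; [rewrite <- exp_0 | rewrite <- (exp_ln E) by lra]; apply exp_increasing;
        [exact Ht0 | exact HtT]. }
    unfold sinh, cosh. rewrite exp_Ropp.
    apply (Rmult_lt_reg_r (2 * exp t)); [lra|].
    field_simplify; [|lra..].
    assert (HE2 : (r - W) * E ^ 2 = r + W) by (unfold E; field_simplify_eq; [nra | lra]).
    assert (exp t ^ 2 < E ^ 2) by nra.
    assert (0 < r - W) by nra.
    nra.
Qed.

Lemma orbit_portion_exists r j h :
  0 < sqrt (h ^ 2 + j ^ 2) < r -> exists gamma t0 t1, orbit_portion r j h gamma t0 t1.
Proof.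
  intros Hrho.
  set (rho := sqrt (h ^ 2 + j ^ 2)) in *.
  set (W := sqrt (r ^ 2 - rho ^ 2)).
  assert (Hrho2 : rho ^ 2 = h ^ 2 + j ^ 2) by (apply pow2_sqrt; nra).
  assert (HW2 : W ^ 2 = r ^ 2 - rho ^ 2) by (apply pow2_sqrt; nra).
  assert (HW : 0 < W) by (apply sqrt_lt_R0; nra).
  destruct (start_point_levels r j h W) as (HJ & HH & Hstart & Htwist); [nra | nra |].
  set (x0 := start_point r j h W) in *.
  destruct (exit_time r rho W Hrho HW HW2) as (HT & HC & HS & Hinside).
  set (T := ln ((r + W) / rho)) in *.
  assert (Hflow : forall t, normsq (XH_flow t x0)
                  = 2 * r + 4 * sinh t * (r * sinh t - W * cosh t)).
  { intros t. rewrite normsq_XH_flow, Hstart, Htwist. field. }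
  exists (fun t => XH_flow t x0), 0, T.
  split; [apply XH_flow_is_orbit |].
  unfold onSphere, inB. rewrite !XH_flow_0, Hflow, HC, HS.
  repeat split; try assumption.
  - replace (r * (W / rho) - W * (r / rho)) with 0 by (field; lra). ring.
  - intros t Ht. rewrite Hflow.
    pose proof (sinh_pos t ltac:(lra)). pose proof (Hinside t Ht). nra.
Qed.

Lemma Phi_rel_eq r j h :
  0 < sqrt (h ^ 2 + j ^ 2) < r -> 0 < sqrt (h ^ 2 + j ^ 2) + j ->
  Phi_rel r j h = Phi_formula r j h.
Proof.
  intros Hrho Hj.
  assert (Hspec : PhiRel_spec r j h (Phi_formula r j h)).
  { split.
    - destruct (orbit_portion_exists r j h Hrho) as (gamma & t0 & t1 & Hp).
      exists gamma, t0, t1. split; [exact Hp |]. constructor.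
      apply ex_RInt_Reals_0. eexists. exact (is_RInt_theta_orbit_portion _ _ _ _ _ _ Hrho Hj Hp).
    - intros gamma t0 t1 Hp pr. rewrite <- RInt_Reals.
      exact (is_RInt_unique _ _ _ _ (is_RInt_theta_orbit_portion _ _ _ _ _ _ Hrho Hj Hp)). }
  unfold Phi_rel.
  pose proof (epsilon_spec (inhabits 0) (PhiRel_spec r j h) (ex_intro _ _ Hspec)) as Heps.
  destruct Heps as [(gamma & t0 & t1 & Hp & [pr]) Hall].
  rewrite <- (Hall gamma t0 t1 Hp pr). exact (proj2 Hspec gamma t0 t1 Hp pr).
Qed.

Definition Gamma_profile (c0 s : R) : R := 2 * atan (c0 * sin s / (1 + cos s)).

Lemma one_plus_cos_pos s : 0 <= s <= 2 * PI -> s <> PI -> 0 < 1 + cos s.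
Proof.
  intros Hs Hn. replace s with (2 * (s / 2)) by field. rewrite cos_2a_cos.
  pose proof PI_RGT_0.
  assert (cos (s / 2) <> 0).
  { destruct (Rtotal_order (s / 2) (PI / 2)) as [Hlt | [Heq | Hgt]].
    - assert (0 < cos (s / 2)) by (apply cos_gt_0; lra). lra.
    - exfalso. apply Hn. lra.
    - assert (cos (s / 2) < 0) by (apply cos_lt_0; lra). lra. }
  assert (0 < Rsqr (cos (s / 2))) by (apply Rsqr_pos_lt; assumption).
  unfold Rsqr in *. lra.
Qed.

Lemma PhiRel_on_Gamma_eq r l s :
  0 < l < r -> 0 < 1 + cos s ->
  PhiRel_on_Gamma r l s = Gamma_profile (sqrt (r ^ 2 - l ^ 2) / (r + l)) s.
Proof.
  intros Hl Hc.
  assert (Hrho : sqrt ((l * sin s) ^ 2 + (l * cos s) ^ 2) = l).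
  { replace ((l * sin s) ^ 2 + (l * cos s) ^ 2) with (l ^ 2).
    - apply sqrt_pow2. lra.
    - pose proof (sin2_cos2 s) as H. unfold Rsqr in H. nra. }
  unfold PhiRel_on_Gamma. rewrite Phi_rel_eq by (rewrite Hrho; nra).
  unfold Phi_formula, Gamma_profile. cbv zeta. rewrite Hrho.
  f_equal. f_equal. field. split; nra.
Qed.

Lemma continuity_pt_of_ex_derive f x : ex_derive f x -> continuity_pt f x.
Proof. intros H. apply continuity_pt_filterlim, continuous_of_ex_derive, H. Qed.

Lemma continuity_pt_eps f x : continuity_pt f x -> forall eps, 0 < eps ->
  exists delta, 0 < delta /\ forall y, Rabs (y - x) < delta -> Rabs (f y - f x) < eps.
Proof.
  intros H eps He. destruct (H eps He) as (d & Hd & Hf). exists d. split; [exact Hd |].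
  intros y Hy. destruct (Req_dec y x) as [-> | Hyx].
  - rewrite Rminus_diag, Rabs_R0. exact He.
  - apply Hf. split; [split; [exact I | auto] | exact Hy].
Qed.

(* Near s = PI the profile equals +PI or -PI minus this function, which is
   continuous at PI (where tan (s / 2) blows up). *)
Definition Gamma_profile_tail (c0 s : R) : R := 2 * atan (sin s / (c0 * (1 - cos s))).

Section GammaProfile.

Variable c0 : R.
Hypothesis Hc0 : 0 < c0.

Lemma Gamma_profile_continuous s : 0 < 1 + cos s -> continuity_pt (Gamma_profile c0) s.
Proof.
  intros Hs. apply continuity_pt_of_ex_derive. unfold Gamma_profile.
  auto_derive. lra.
Qed.

Lemma Gamma_profile_tail_continuous : continuity_pt (Gamma_profile_tail c0) PI.
Proof.
  apply continuity_pt_of_ex_derive. unfold Gamma_profile_tail.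
  auto_derive. rewrite cos_PI. apply Rgt_not_eq. lra.
Qed.

Lemma Gamma_profile_tail_PI : Gamma_profile_tail c0 PI = 0.
Proof. unfold Gamma_profile_tail. rewrite sin_PI. unfold Rdiv. rewrite Rmult_0_l, atan_0. ring. Qed.

Lemma Gamma_profile_upper s : 0 < s < PI -> Gamma_profile c0 s = PI - Gamma_profile_tail c0 s.
Proof.
  intros Hs. unfold Gamma_profile, Gamma_profile_tail.
  assert (Hsin : 0 < sin s) by (apply sin_gt_0; lra).
  pose proof (sin2_cos2 s) as Hsc. unfold Rsqr in Hsc.
  assert (Hcos : -1 < cos s < 1) by nra.
  set (u := c0 * sin s / (1 + cos s)).
  assert (Hu : 0 < u) by (apply Rdiv_lt_0_compat; nra).
  replace (sin s / (c0 * (1 - cos s))) with (/ u) by (unfold u; field_simplify_eq; nra).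
  rewrite atan_inv by exact Hu. field.
Qed.

Lemma Gamma_profile_lower s :
  PI < s < 2 * PI -> Gamma_profile c0 s = - PI - Gamma_profile_tail c0 s.
Proof.
  intros Hs. unfold Gamma_profile, Gamma_profile_tail.
  assert (Hsin : sin s < 0) by (apply sin_lt_0; lra).
  pose proof (sin2_cos2 s) as Hsc. unfold Rsqr in Hsc.
  assert (Hcos : -1 < cos s < 1) by nra.
  set (u := - (c0 * sin s / (1 + cos s))).
  assert (Hu : 0 < u).
  { unfold u. apply Ropp_0_gt_lt_contravar. apply Rdiv_neg_pos; nra. }
  replace (c0 * sin s / (1 + cos s)) with (- u) by (unfold u; ring).
  replace (sin s / (c0 * (1 - cos s))) with (- / u) by (unfold u; field_simplify_eq; nra).
  rewrite !atan_opp, atan_inv by exact Hu. field.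
Qed.

Lemma Gamma_profile_left_lim : left_lim (Gamma_profile c0) PI PI.
Proof.
  intros eps He. pose proof PI_RGT_0.
  destruct (continuity_pt_eps _ _ Gamma_profile_tail_continuous eps He) as (d & Hd & Hcont).
  exists (Rmin d PI). split; [apply Rmin_pos; lra |].
  intros s Hs. pose proof (Rmin_l d PI). pose proof (Rmin_r d PI).
  rewrite Gamma_profile_upper by lra.
  replace (PI - Gamma_profile_tail c0 s - PI)
    with (- (Gamma_profile_tail c0 s - Gamma_profile_tail c0 PI))
    by (rewrite Gamma_profile_tail_PI; ring).
  rewrite Rabs_Ropp. apply Hcont. rewrite Rabs_left; lra.
Qed.

Lemma Gamma_profile_right_lim : right_lim (Gamma_profile c0) PI (- PI).
Proof.
  intros eps He. pose proof PI_RGT_0.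
  destruct (continuity_pt_eps _ _ Gamma_profile_tail_continuous eps He) as (d & Hd & Hcont).
  exists (Rmin d PI). split; [apply Rmin_pos; lra |].
  intros s Hs. pose proof (Rmin_l d PI). pose proof (Rmin_r d PI).
  rewrite Gamma_profile_lower by lra.
  replace (- PI - Gamma_profile_tail c0 s - - PI)
    with (- (Gamma_profile_tail c0 s - Gamma_profile_tail c0 PI))
    by (rewrite Gamma_profile_tail_PI; ring).
  rewrite Rabs_Ropp. apply Hcont. rewrite Rabs_right; lra.
Qed.

End GammaProfile.

Lemma left_lim_unique g p L1 L2 : left_lim g p L1 -> left_lim g p L2 -> L1 = L2.
Proof.
  intros H1 H2. destruct (Req_dec L1 L2) as [E | E]; [exact E | exfalso].
  set (e := Rabs (L1 - L2) / 2).
  assert (He : 0 < e) by (apply Rdiv_lt_0_compat; [apply Rabs_pos_lt; lra | lra]).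
  destruct (H1 e He) as (d1 & Hd1 & K1). destruct (H2 e He) as (d2 & Hd2 & K2).
  set (s := p - Rmin d1 d2 / 2).
  pose proof (Rmin_l d1 d2). pose proof (Rmin_r d1 d2). pose proof (Rmin_pos d1 d2 Hd1 Hd2).
  assert (A1 : Rabs (g s - L1) < e) by (apply K1; unfold s; lra).
  assert (A2 : Rabs (g s - L2) < e) by (apply K2; unfold s; lra).
  assert (Rabs (L1 - L2) <= Rabs (g s - L1) + Rabs (g s - L2)).
  { replace (L1 - L2) with (- (g s - L1) + (g s - L2)) by ring.
    rewrite <- (Rabs_Ropp (g s - L1)). apply Rabs_triang. }
  unfold e in *. lra.
Qed.

Lemma left_lim_reflect g p L : right_lim g p L -> left_lim (fun s => g (- s)) (- p) L.
Proof.
  intros H eps He. destruct (H eps He) as (d & Hd & K).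
  exists d. split; [exact Hd |]. intros s Hs. apply K. lra.
Qed.

Lemma right_lim_unique g p L1 L2 : right_lim g p L1 -> right_lim g p L2 -> L1 = L2.
Proof.
  intros H1 H2.
  exact (left_lim_unique _ _ _ _ (left_lim_reflect _ _ _ H1) (left_lim_reflect _ _ _ H2)).
Qed.

Lemma cont_on_loop_left_lim g p :
  0 < p < 2 * PI -> cont_on_loop_at g p -> left_lim g p (g p).
Proof.
  intros Hp H eps He. destruct (H eps He) as (d & Hd & K). exists (Rmin d p).
  split; [apply Rmin_pos; lra |]. intros s Hs.
  pose proof (Rmin_l d p). pose proof (Rmin_r d p).
  apply K; [lra | rewrite Rabs_left; lra].
Qed.

Lemma cont_on_loop_right_lim g p :
  0 < p < 2 * PI -> cont_on_loop_at g p -> right_lim g p (g p).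
Proof.
  intros Hp H eps He. destruct (H eps He) as (d & Hd & K). exists (Rmin d (2 * PI - p)).
  split; [apply Rmin_pos; lra |]. intros s Hs.
  pose proof (Rmin_l d (2 * PI - p)). pose proof (Rmin_r d (2 * PI - p)).
  apply K; [lra | rewrite Rabs_right; lra].
Qed.

Lemma sum_jumps_single_point (js : list (R * R * R)) p delta :
  NoDup (map (fun x => fst (fst x)) js) ->
  (forall q Lm Lp, In (q, Lm, Lp) js -> Lp - Lm = if Req_EM_T q p then delta else 0) ->
  fold_right Rplus 0 (map (fun x => snd x - snd (fst x)) js)
  = if in_dec Req_EM_T p (map (fun x => fst (fst x)) js) then delta else 0.
Proof.
  induction js as [| [[q Lm] Lp] js IH]; intros Hnd Hjump; cbn [map fold_right fst snd].
  - destruct (in_dec Req_EM_T p nil) as [[] | _]. reflexivity.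
  - apply NoDup_cons_iff in Hnd as [Hq Hnd].
    rewrite IH, (Hjump q Lm Lp (or_introl eq_refl))
      by (assumption || (intros; apply Hjump; right; assumption)).
    destruct (in_dec Req_EM_T p (q :: _)) as [Hin | Hnin];
      destruct (in_dec Req_EM_T p (map _ js)); destruct (Req_EM_T q p);
      cbn [In] in *; try ring; exfalso; subst; tauto.
Qed.

Section SingleJump.

Variables (g G : R -> R) (p Lm Lp : R).
Hypothesis Hp : 0 < p < 2 * PI.
Hypothesis HgG : forall s, 0 <= s <= 2 * PI -> s <> p -> g s = G s.
Hypothesis HG : forall s, 0 <= s <= 2 * PI -> s <> p -> continuity_pt G s.
Hypothesis HGleft : left_lim G p Lm.
Hypothesis HGright : right_lim G p Lp.

Lemma single_jump_left_lim : left_lim g p Lm.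
Proof.
  intros eps He. destruct (HGleft eps He) as (d & Hd & K). exists (Rmin d p).
  split; [apply Rmin_pos; lra |]. intros s Hs.
  pose proof (Rmin_l d p). pose proof (Rmin_r d p).
  rewrite HgG by lra. apply K. lra.
Qed.

Lemma single_jump_right_lim : right_lim g p Lp.
Proof.
  intros eps He. destruct (HGright eps He) as (d & Hd & K). exists (Rmin d (2 * PI - p)).
  split; [apply Rmin_pos; lra |]. intros s Hs.
  pose proof (Rmin_l d (2 * PI - p)). pose proof (Rmin_r d (2 * PI - p)).
  rewrite HgG by lra. apply K. lra.
Qed.

Lemma single_jump_cont s : 0 <= s <= 2 * PI -> s <> p -> cont_on_loop_at g s.
Proof.
  intros Hs Hsp eps He.
  destruct (continuity_pt_eps _ _ (HG s Hs Hsp) eps He) as (d & Hd & K).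
  exists (Rmin d (Rabs (s - p))). split; [apply Rmin_pos; [exact Hd | apply Rabs_pos_lt; lra] |].
  intros s' Hs' Hd'. pose proof (Rmin_l d (Rabs (s - p))). pose proof (Rmin_r d (Rabs (s - p))).
  assert (s' <> p) by (intros ->; rewrite Rabs_minus_sym in Hd'; lra).
  rewrite !HgG by assumption. apply K. lra.
Qed.

Lemma var_Gamma_single_jump v : var_Gamma g v <-> v = Lm - Lp.
Proof.
  split.
  - intros (js & Hnd & Hjumps & Hcont & ->).
    assert (Hjump : forall q L1 L2, In (q, L1, L2) js ->
                      L2 - L1 = if Req_EM_T q p then Lp - Lm else 0).
    { intros q L1 L2 Hin. destruct (Hjumps q L1 L2 Hin) as (Hq & HL1 & HL2).
      destruct (Req_EM_T q p) as [Eqp | Hqp].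
      - subst q. rewrite (left_lim_unique _ _ _ _ HL1 single_jump_left_lim),
          (right_lim_unique _ _ _ _ HL2 single_jump_right_lim). reflexivity.
      - pose proof (single_jump_cont q ltac:(lra) Hqp) as Hc.
        rewrite (left_lim_unique _ _ _ _ HL1 (cont_on_loop_left_lim g q Hq Hc)),
          (right_lim_unique _ _ _ _ HL2 (cont_on_loop_right_lim g q Hq Hc)). ring. }
    rewrite (sum_jumps_single_point js p (Lp - Lm) Hnd Hjump).
    destruct (in_dec Req_EM_T p _) as [_ | Hnotin]; [ring |].
    assert (Hc : cont_on_loop_at g p) by (apply Hcont; [lra | exact Hnotin]).
    rewrite (left_lim_unique _ _ _ _ single_jump_left_lim (cont_on_loop_left_lim g p Hp Hc)),
      (right_lim_unique _ _ _ _ single_jump_right_lim (cont_on_loop_right_lim g p Hp Hc)).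
    ring.
  - intros ->. exists ((p, Lm, Lp) :: nil). cbn. split; [|split; [|split]].
    + constructor; [intros [] | constructor].
    + intros q L1 L2 [E | []]. injection E as <- <- <-.
      split; [exact Hp | split; [exact single_jump_left_lim | exact single_jump_right_lim]].
    + intros s Hs Hn. apply single_jump_cont; [exact Hs | intros ->; apply Hn; left; reflexivity].
    + ring.
Qed.

End SingleJump.

Theorem mainTheorem13 :
  forall r : R, 0 < r ->
  exists l0 : R, 0 < l0 /\
    forall l : R, 0 < l < l0 ->
      var_Gamma (PhiRel_on_Gamma r l) (2 * PI) /\
      (forall k : Z, var_Gamma (PhiRel_on_Gamma r l) (- (2 * PI * IZR k)) ->
         k = (-1)%Z).
Proof.
  intros r Hr. exists r. split; [exact Hr |]. intros l Hl.
  set (c0 := sqrt (r ^ 2 - l ^ 2) / (r + l)).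
  assert (Hc0 : 0 < c0) by (apply Rdiv_lt_0_compat; [apply sqrt_lt_R0; nra | lra]).
  pose proof PI_RGT_0.
  assert (Hvar : forall v, var_Gamma (PhiRel_on_Gamma r l) v <-> v = PI - - PI).
  { intros v. apply (var_Gamma_single_jump _ (Gamma_profile c0) PI PI (- PI)).
    - lra.
    - intros s Hs Hsp. exact (PhiRel_on_Gamma_eq r l s Hl (one_plus_cos_pos s Hs Hsp)).
    - intros s Hs Hsp. exact (Gamma_profile_continuous c0 s (one_plus_cos_pos s Hs Hsp)).
    - exact (Gamma_profile_left_lim c0 Hc0).
    - exact (Gamma_profile_right_lim c0 Hc0). }
  split.
  - apply Hvar. ring.
  - intros k Hk. apply Hvar in Hk. apply eq_IZR.
    apply (Rmult_eq_reg_r (2 * PI)); lra.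
Qed.
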